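(* Let $n$ be odd with $n\mid(q+1)$, let $m$ be a positive even integer, $b$ a positive integer with $\gcd(b,n)=1$, and $\delta$ an even integer with $2\le\delta\le\frac{n-m+1}{2}$. Put $$A=\{\alpha^{0}\}\cup\{\alpha^{\pm\frac{n+2j-1}{2}b}: j=1,\dots,\tfrac{m}{2}\},\qquad B=\{\alpha^{jb}:-\tfrac{\delta-2}{2}\le j\le\tfrac{\delta-2}{2}\},$$ and let $d_A^{\perp}$ be the minimum distance of the dual of the cyclic code of length $n$ over $\mathbb{F}_{q^2}$ with complete defining set $A$. Then $C_{AB}$ is a cyclic $(d_A^{\perp}-\delta+1,\delta)$-LRC over $\mathbb{F}_q$ with dimension $n-m-2\delta+3$. If moreover $\delta-2<n-m-d_A^{\perp}$, then $C_{AB}$ is optimal and has minimum distance $m+\delta-1$.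
   Context: Let $q$ be a prime power and $n\mid(q+1)$, so the set $R_n$ of all $n$-th roots of unity lies in $\mathbb{F}_{q^2}$; let $\alpha\in\mathbb{F}_{q^2}$ be a primitive $n$-th root of unity. For $A,B\subseteq R_n$, $AB=\{\beta\gamma:\beta\in A,\gamma\in B\}$. For $Z\subseteq R_n$, the cyclic code of length $n$ over $\mathbb{F}_{q^2}$ with complete defining set $Z$ is the ideal generated by $\prod_{\beta\in Z}(x-\beta)$ in $\mathbb{F}_{q^2}[x]/(x^n-1)$; if $\{j:\alpha^j\in Z\}$ is closed under $j\mapsto-j\bmod n$ (a union of $q$-cyclotomic cosets), $C_Z$ denotes the cyclic code of length $n$ over $\mathbb{F}_q$ generated by this polynomial, which lies in $\mathbb{F}_q[x]$. Locality: for a linear code $C\subseteq\mathbb{F}_q^n$ and integers $r\ge1$, $\delta\ge2$, the $i$-th coordinate has $(r,\delta)$-locality if there is $S_i\subseteq\{1,\dots,n\}$ with $i\in S_i$, $|S_i|\le r+\delta-1$ such that the punctured code $C|_{S_i}$ has minimum distance at least $\delta$; $C$ is an $(r,\delta)$-LRC if every coordinate has $(r,\delta)$-locality. An $[n,k,d]$ $(r,\delta)$-LRC is optimal if $d=n-k-(\lceil k/r\rceil-1)(\delta-1)+1$ (always an upper bound on $d$). *)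

From HB Require Import structures.
From mathcomp Require Import all_boot all_order all_algebra all_field.
Set Implicit Arguments. Unset Strict Implicit. Unset Printing Implicit Defensive.
Import Order.TTheory GRing.Theory Num.Theory.
Local Open Scope ring_scope.

Definition code (R : Type) (n : nat) := 'rV[R]_n -> Prop.

Definition wt (R : nzRingType) n (c : 'rV[R]_n) : nat := #|[set i | c 0 i != 0]|.
Definition wt_on (R : nzRingType) n (S : {set 'I_n}) (c : 'rV[R]_n) : nat :=
  #|[set i in S | c 0 i != 0]|.

Definition is_min_dist (R : nzRingType) n (C : code R n) (d : nat) : Prop :=
  (exists2 c, C c & c != 0 /\ wt c = d) /\
  (forall c, C c -> c != 0 -> (d <= wt c)%N).

Definition has_dim (K : fieldType) n (C : code K n) (k : nat) : Prop :=
  exists G : 'M[K]_(k, n), row_free G /\ forall c, C c <-> (c <= G)%MS.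

Definition dual (R : nzRingType) n (C : code R n) : code R n :=
  fun v => forall c, C c -> \sum_i v 0 i * c 0 i = 0.

Definition cshift (R : Type) n (c : 'rV[R]_n) : 'rV[R]_n :=
  \row_i c 0 (ord_pred i).
Definition is_cyclic (R : Type) n (C : code R n) : Prop :=
  forall c, C c -> C (cshift c).

(* (r,delta)-locality: for every coordinate i there is S containing i with
   |S| <= r + delta - 1 such that the punctured code C|_S has minimum distance
   >= delta, i.e. every codeword whose restriction to S is nonzero has
   at least delta nonzero entries in S. *)
Definition is_LRC (R : nzRingType) n (C : code R n) (r delta : nat) : Prop :=
  forall i : 'I_n, exists S : {set 'I_n},
    [/\ i \in S, (#|S| <= r + delta - 1)%N &
        forall c, C c -> wt_on S c != 0%N -> (delta <= wt_on S c)%N].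

Definition optimal_LRC_params (n k d r delta : nat) : Prop :=
  (d%:Z = n%:Z - k%:Z - (((k + r - 1) %/ r)%N%:Z - 1) * (delta%:Z - 1) + 1)%R.

Definition gen_poly (L : fieldType) (Z : seq L) : {poly L} :=
  \prod_(beta <- undup Z) ('X - beta%:P).

(* cyclic code of length n over L with complete defining set Z:
   the ideal generated by gen_poly Z in L[x]/(x^n-1), i.e. the words whose
   polynomial (degree < n) is divisible by gen_poly Z *)
Definition cyc_code (L : fieldType) n (Z : seq L) : code L n :=
  fun c => gen_poly Z %| rVpoly c.

Definition cyc_code_sub (K : fieldType) (L : fieldExtType K) n (Z : seq L)
  : code K n :=
  fun c => gen_poly Z %| map_poly (in_alg L) (rVpoly c).

Definition setmul (L : fieldType) (A B : seq L) : seq L :=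
  undup [seq x * y | x <- A, y <- B].

Definition setA (L : fieldType) (alpha : L) (n m b : nat) : seq L :=
  undup (1 :: [seq alpha ^ ((((n + 2 * j - 1) %/ 2) * b)%N%:Z) | j <- iota 1 m./2]
           ++ [seq alpha ^ (- (((n + 2 * j - 1) %/ 2) * b)%N%:Z) | j <- iota 1 m./2]).

Definition setB (L : fieldType) (alpha : L) (b delta : nat) : seq L :=
  let h := ((delta - 2) %/ 2)%N in
  undup [seq alpha ^ ((i%:Z - h%:Z) * b%:Z) | i <- iota 0 (2 * h + 1)].

Arguments cyc_code {L} n Z.
Arguments cyc_code_sub {K L} n Z.

From HB Require Import structures.
From mathcomp Require Import all_boot all_order all_algebra all_field.
From mathcomp Require Import zify ring.
Set Implicit Arguments. Unset Strict Implicit. Unset Printing Implicit Defensive.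
Import Order.TTheory GRing.Theory Num.Theory.
Local Open Scope ring_scope.

(* Write n = 2N+1, m = 2M, delta = 2h+2 and g = alpha^b, a primitive n-th root
   of unity. Then AB = {g^s} with s ranging over the three arcs [0, h],
   [N+1-M-h, N+M+h] and [n-h, n) of Z/n: it has m + 2 delta - 3 elements and is
   closed under inversion, which is the q-Frobenius since z^(q+1) = 1. Hence the
   generator polynomial of AB has coefficients in F_q and C_AB has dimension
   k = n - |AB|, while the middle arc gives m + delta - 2 consecutive zeros and
   the BCH bound d >= m + delta - 1.
   For locality, multiply a codeword c coordinatewise by a cyclic shift of a
   minimum weight word v of the dual of C_A: the product is annihilated by the
   delta - 1 consecutive powers of g in B, so c restricted to the shifted
   support of v (of size d_A^perp) is zero or has weight >= delta.
   Conversely, a nonzero codeword vanishing on r = d_A^perp - delta + 1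
   coordinates of such a support and on k - 1 - r coordinates outside it
   vanishes on the whole support, so d <= n - k - delta + 2 = m + delta - 1.
   As k <= 2r, this is the Singleton-type bound with ceil(k/r) = 2. *)

Definition local_dist (R : nzRingType) n (C : code R n) (S : {set 'I_n})
    (delta : nat) :=
  forall c, C c -> wt_on S c != 0%N -> (delta <= wt_on S c)%N.

Lemma exists_subset_card (T : finType) (A : {set T}) k : (k <= #|A|)%N ->
  exists2 B : {set T}, B \subset A & #|B| = k.
Proof.
move=> k_le; exists [set x in take k (enum A)].
  by apply/subsetP => x; rewrite inE => /mem_take; rewrite mem_enum.
rewrite cardsE (card_uniqP _) ?take_uniq ?enum_uniq // size_take -cardE.
by case: ltngtP k_le => // ->.
Qed.

Lemma is_min_distP (R : nzRingType) n (C : code R n) d :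
  (exists2 c, C c & c != 0 /\ (wt c <= d)%N) ->
  (forall c, C c -> c != 0 -> (d <= wt c)%N) -> is_min_dist C d.
Proof.
move=> [c Cc [c_neq0 wt_c]] wt_lb; split=> //; exists c => //; split=> //.
by apply/eqP; rewrite eqn_leq wt_c wt_lb.
Qed.

Lemma optimal_LRC_params_ceil2 n k d r delta : (r < k <= 2 * r)%N ->
  (d + k + delta = n + 2)%N -> optimal_LRC_params n k d r delta.
Proof.
move=> /andP [r_lt_k k_le2r] sum_d; rewrite /optimal_LRC_params.
have -> : ((k + r - 1) %/ r = 2)%N.
  have r_gt0 : (0 < r)%N by lia.
  rewrite (_ : (k + r - 1 = 2 * r + (k - r - 1))%N); last by lia.
  by rewrite divnMDl // divn_small ?addn0 //; lia.
lia.
Qed.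

Section LinearCodes.
Variables (F : fieldType) (n : nat).

Lemma rVpoly_sum (c : 'rV[F]_n) : rVpoly c = \sum_(i < n) c 0 i *: 'X^i.
Proof. by rewrite /rVpoly poly_def; apply: eq_bigr => i _; rewrite valK. Qed.

(* The code is the kernel of c |-> rVpoly c %% g, a map onto polynomials of
   degree < d since it fixes 'X^i for i < d. *)
Lemma has_dim_dvdp (g : {poly F}) d : g != 0 -> size g = d.+1 -> (d <= n)%N ->
  has_dim (fun c : 'rV[F]_n => g %| rVpoly c) (n - d).
Proof.
move=> g_neq0 size_g d_le_n.
pose M : 'M[F]_(n, d) := \matrix_(i, j) ('X^i %% g)`_j.
have mulM (c : 'rV_n) j : (c *m M) 0 j = (rVpoly c %% g)`_j.
  rewrite !mxE rVpoly_sum.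
  have -> : (\sum_(i < n) c 0 i *: 'X^i) %% g = \sum_(i < n) c 0 i *: ('X^i %% g).
    elim/big_rec2: _ => [|i y p _ IH]; first by rewrite mod0p.
    by rewrite modpD modpZl IH.
  by rewrite coef_sum; apply: eq_bigr => i _; rewrite coefZ mxE.
have kerM (c : 'rV_n) : (c *m M == 0) = (g %| rVpoly c).
  rewrite /dvdp; apply/eqP/eqP => [cM0 | c_mod].
    apply/polyP => j; rewrite coef0; case: (ltnP j d) => [jd | dj].
      by rewrite -(mulM c (Ordinal jd)) cM0 mxE.
    apply: nth_default; apply: leq_trans dj.
    by rewrite -ltnS -size_g ltn_modp.
  by apply/rowP => j; rewrite mulM c_mod coef0 mxE.
have rank_M : \rank M = d.
  apply/eqP; apply/row_fullP; exists (\matrix_(j, i) ((val i == val j)%:R : F)).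
  apply/matrixP => j j'; rewrite !mxE.
  have jn : (j < n)%N by apply: leq_trans (ltn_ord j) d_le_n.
  rewrite (bigD1 (Ordinal jn)) //= big1 ?addr0; last first.
    by move=> i /negbTE; rewrite !mxE -val_eqE /= => ->; rewrite mul0r.
  rewrite !mxE eqxx mul1r modp_small; last by rewrite size_polyXn size_g ltnS /=.
  by rewrite coefXn eq_sym.
have rank_kerM : \rank (kermx M) = (n - d)%N by rewrite mxrank_ker rank_M.
rewrite /has_dim -rank_kerM.
exists (row_base (kermx M)); split; first exact: row_base_free.
by move=> c; rewrite eq_row_base sub_kermx kerM.
Qed.

Lemma has_dim_vanishing (C : code F n) k (T : {set 'I_n}) :
  has_dim C k -> (#|T| < k)%N ->
  exists2 c, C c & c != 0 /\ {in T, forall t, c 0 t = 0}.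
Proof.
move=> [G [G_free CG]] T_lt_k; pose f : 'I_#|T| -> 'I_n := enum_val.
have : kermx (colsub f G) != 0.
  rewrite kermx_eq0 /row_free neq_ltn; apply/orP; left.
  exact: leq_ltn_trans (rank_leq_col _) T_lt_k.
case/rowV0Pn => x /sub_kermxP xG x_neq0.
exists (x *m G); first by apply/CG/submxMl.
split; first by rewrite mulmx_free_eq0.
move=> t Tt; rewrite -(enum_rankK_in Tt Tt).
have := congr1 (fun w : 'rV_#|T| => w 0 (enum_rank_in Tt t)) xG.
by rewrite mulmx_colsub !mxE.
Qed.

(* The codeword vanishes on r coordinates of S, hence has local weight
   < delta on S, hence vanishes on all of S. *)
Lemma local_dist_wt_ub (C : code F n) k r delta (S : {set 'I_n}) :
  has_dim C k -> local_dist C S delta -> #|S| = (r + delta - 1)%N ->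
  (0 < delta)%N -> (r < k)%N -> (k + delta <= n + 2)%N ->
  exists2 c, C c & c != 0 /\ (wt c + k + delta <= n + 2)%N.
Proof.
move=> C_k S_local card_S delta_gt0 r_lt_k kd_le.
have [S0 S0_sub card_S0] := @exists_subset_card _ S r (ltac:(lia)).
have card_notS : #|~: S| = (n - #|S|)%N.
  by have := cardsC S; rewrite card_ord; lia.
have [E E_sub card_E] := @exists_subset_card _ (~: S) (k - 1 - r) (ltac:(lia)).
have [|c Cc [c_neq0 c0]] := @has_dim_vanishing C k (S0 :|: E) C_k.
  by have := cardsU S0 E; lia.
have cS0 : {in S, forall t, c 0 t = 0}.
  have wt_S_lt : (wt_on S c < delta)%N.
    apply: (@leq_ltn_trans #|S :\: S0|).
      apply/subset_leq_card/subsetP => t; rewrite !inE => /andP [St ct].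
      by rewrite St andbT; apply: contra ct => S0t; rewrite c0 ?eqxx // inE S0t.
    by rewrite cardsD (setIidPr S0_sub); lia.
  have : wt_on S c == 0%N.
    by apply: contraTT wt_S_lt => /(S_local c Cc); rewrite -leqNgt.
  rewrite cards_eq0 => /eqP S_c t St; apply/eqP; apply: contraT => ct.
  by have := in_set0 t; rewrite -S_c !inE St ct.
exists c => //; split => //.
have disj : [disjoint S & E].
  by rewrite disjoint_sym -[S]setCK -subsets_disjoint.
have : (wt c <= #|~: (S :|: E)|)%N.
  apply/subset_leq_card/subsetP => t; rewrite !inE.
  apply: contraNN => /orP [St | Et]; first by rewrite cS0.
  by rewrite c0 // inE Et orbT.
have := cardsC (S :|: E).
by rewrite card_ord cardsU (disjoint_setI0 disj) cards0; lia.
Qed.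

End LinearCodes.

Section CyclicCodes.
Variables (L : fieldType) (n : nat).

Lemma gen_poly_dvdE (Z : seq L) (p : {poly L}) :
  (gen_poly Z %| p) = all (root p) Z.
Proof.
apply/idP/allP => [Zp z Zz | Zp].
  by apply: root_dvdp Zp _; rewrite root_prod_XsubC mem_undup.
apply: uniq_roots_dvdp; last by rewrite uniq_rootsE undup_uniq.
by apply/allP => z; rewrite mem_undup => /Zp.
Qed.

Lemma horner_rVpoly_sum (c : 'rV[L]_n) x :
  (rVpoly c).[x] = \sum_(i < n) c 0 i * x ^+ i.
Proof. by rewrite horner_poly; apply: eq_bigr => i _; rewrite valK. Qed.

Lemma cyc_codeP (Z : seq L) (c : 'rV[L]_n) :
  cyc_code n Z c <-> {in Z, forall z, \sum_(i < n) c 0 i * z ^+ i = 0}.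
Proof.
rewrite /cyc_code gen_poly_dvdE; split => [/allP Zc z /Zc | Zc].
  by rewrite rootE horner_rVpoly_sum => /eqP.
by apply/allP => z /Zc; rewrite rootE horner_rVpoly_sum => ->.
Qed.

Lemma cshift_sum (c : 'rV[L]_n) z : z ^+ n = 1 ->
  \sum_(i < n) cshift c 0 i * z ^+ i = z * \sum_(i < n) c 0 i * z ^+ i.
Proof.
move=> zn; rewrite (reindex_inj (can_inj (@ordSK n))) mulr_sumr.
by apply: eq_bigr => u _; rewrite mxE ordSK /= expr_mod // exprS mulrCA.
Qed.

Lemma cyc_code_cyclic (Z : seq L) :
  {in Z, forall z, z ^+ n = 1} -> is_cyclic (cyc_code n Z).
Proof.
move=> Zn c /cyc_codeP Zc; apply/cyc_codeP => z Zz.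
by rewrite cshift_sum ?Zn // Zc // mulr0.
Qed.

Lemma root1_neq0 (z : L) : (0 < n)%N -> z ^+ n = 1 -> z != 0.
Proof.
move=> n_gt0 zn; apply: contra_eqN zn => /eqP ->.
by rewrite expr0n eqn0Ngt n_gt0 /= eq_sym oner_eq0.
Qed.

Lemma wt0 : wt (0 : 'rV[L]_n) = 0%N.
Proof.
by apply/eqP; rewrite cards_eq0; apply/eqP/setP => i; rewrite !inE mxE eqxx.
Qed.

(* The restriction of x to its support solves a Vandermonde system whose
   nodes g^i, i in the support, are distinct. *)
Lemma bch_bound (g : L) (x : 'rV[L]_n) (s D : nat) : n.-primitive_root g ->
  (forall j, (j < D)%N -> \sum_(i < n) x 0 i * (g ^+ (s + j)) ^+ i = 0) ->
  x != 0 -> (D < wt x)%N.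
Proof.
move=> g_prim x_zeros x_neq0; rewrite ltnNge; apply/negP => wt_leD.
pose T := [set i | x 0 i != 0].
have [i0 Ti0] : exists i0, i0 \in T.
  by have /rV0Pn [i0 xi0] := x_neq0; exists i0; rewrite inE.
pose f : 'I_#|T| -> 'I_n := enum_val.
pose V := Vandermonde #|T| (\row_t g ^+ f t).
pose y : 'cV[L]_#|T| := \col_t (x 0 (f t) * g ^+ (s * f t)).
have Vy0 : V *m y = 0.
  apply/colP => j; rewrite !mxE.
  apply: (etrans _ (x_zeros j (leq_trans (ltn_ord j) wt_leD))).
  rewrite [RHS](bigID (mem T)) /= [X in _ + X]big1 ?addr0; last first.
    by move=> i; rewrite inE negbK => /eqP ->; rewrite mul0r.
  rewrite [RHS]big_enum_val; apply: eq_bigr => t _; rewrite !mxE.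
  by rewrite -!exprM mulnDl exprD [(f t * j)%N]mulnC exprM mulrA [RHS]mulrC.
have V_unit : V \in unitmx.
  rewrite unitmxE unitfE det_Vandermonde; apply/prodf_neq0 => i _.
  apply/prodf_neq0 => j ij; rewrite !mxE subr_eq0 (eq_prim_root_expr g_prim).
  rewrite !modn_small //; apply: contraTneq ij => /val_inj /enum_val_inj ->.
  by rewrite ltnn.
have y0 : y = 0 by rewrite -(mulKmx V_unit y) Vy0 mulmx0.
have := congr1 (fun M : 'cV_#|T| => M (enum_rank_in Ti0 i0) 0) y0.
rewrite !mxE /f (enum_rankK_in Ti0 Ti0) => /eqP; rewrite mulf_eq0 expf_eq0.
rewrite (prim_root_eq0 g_prim) eqn0Ngt (leq_ltn_trans _ (ltn_ord i0)) //.
by rewrite andbF orbF; move: Ti0; rewrite inE => /negbTE ->.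
Qed.

Lemma row_powers_cyc_code (Z : seq L) z :
  {in Z, forall a, (z * a) ^+ n = 1 /\ z * a != 1} ->
  cyc_code n Z (\row_i z ^+ i).
Proof.
move=> Zz; apply/cyc_codeP => a /Zz [za_n za_neq1].
have := subrX1 (z * a) n; rewrite za_n subrr => /esym/eqP.
rewrite mulf_eq0 subr_eq0 (negbTE za_neq1) /= => /eqP sum0.
by rewrite -[RHS]sum0; apply: eq_bigr => i _; rewrite mxE exprMn.
Qed.

Lemma dual_cyc_code_wt (Z : seq L) (g : L) (s D : nat) (v : 'rV[L]_n) :
  n.-primitive_root g ->
  (forall j, (j < D)%N ->
     {in Z, forall a, (g ^+ (s + j) * a) ^+ n = 1 /\ g ^+ (s + j) * a != 1}) ->
  dual (cyc_code n Z) v -> v != 0 -> (D < wt v)%N.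
Proof.
move=> g_prim Zg v_dual.
apply: (bch_bound g_prim) => j /Zg /row_powers_cyc_code /v_dual vw.
by apply: (etrans _ vw); apply: eq_bigr => i _; rewrite mxE.
Qed.

Definition ord_rot (k : nat) (u : 'I_n) : 'I_n :=
  Ordinal (ltn_pmod (u + k) (leq_ltn_trans (leq0n u) (ltn_ord u))).

Lemma ord_rot_inj k : injective (ord_rot k).
Proof.
move=> u v /(congr1 val) /= /eqP; rewrite eqn_modDr !modn_small //.
by move/eqP/val_inj.
Qed.

Lemma expr_ord_rot k (u : 'I_n) (z : L) : z ^+ n = 1 ->
  z ^+ ord_rot k u = z ^+ u * z ^+ k.
Proof. by move=> zn; rewrite /= expr_mod // exprD. Qed.

(* The word (c_{u+k} b^{u+k})_u lies in C_A, as its evaluation at a is a^-k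
   times that of c at ab; its inner product with v is b^k times the sum. *)
Lemma dual_rot_orth (A B : seq L) (v c : 'rV[L]_n) k b : (0 < n)%N ->
  {in A, forall a, a ^+ n = 1} -> {in B, forall b, b ^+ n = 1} ->
  dual (cyc_code n A) v -> cyc_code n (setmul A B) c -> b \in B ->
  \sum_(u < n) v 0 u * c 0 (ord_rot k u) * b ^+ u = 0.
Proof.
move=> n_gt0 An Bn v_dual /cyc_codeP c_AB Bb.
pose w : 'rV[L]_n := \row_u (c 0 (ord_rot k u) * b ^+ ord_rot k u).
have w_A : cyc_code n A w.
  apply/cyc_codeP => a Aa.
  apply/(mulfI (expf_neq0 k (root1_neq0 n_gt0 (An a Aa)))); rewrite mulr0.
  have ab_AB : a * b \in setmul A B by rewrite mem_undup; apply: allpairs_f.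
  apply: (etrans _ (c_AB _ ab_AB)).
  rewrite mulr_sumr [RHS](reindex_inj (@ord_rot_inj k)); apply: eq_bigr => u _.
  by rewrite mxE exprMn (expr_ord_rot _ _ (An a Aa)); ring.
apply/(mulfI (expf_neq0 k (root1_neq0 n_gt0 (Bn b Bb)))); rewrite mulr0.
apply: (etrans _ (v_dual w w_A)); rewrite mulr_sumr; apply: eq_bigr => u _.
by rewrite mxE (expr_ord_rot _ _ (Bn b Bb)); ring.
Qed.

Lemma rot_support_local_dist (A B : seq L) (g : L) s D (v : 'rV[L]_n) k :
  n.-primitive_root g ->
  {in A, forall a, a ^+ n = 1} -> {in B, forall b, b ^+ n = 1} ->
  (forall j, (j < D)%N -> g ^+ (s + j) \in B) -> dual (cyc_code n A) v ->
  local_dist (cyc_code n (setmul A B)) (ord_rot k @: [set u | v 0 u != 0]) D.+1.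
Proof.
move=> g_prim An Bn gB v_dual c c_AB; set S := ord_rot k @: _.
pose x : 'rV[L]_n := \row_u (v 0 u * c 0 (ord_rot k u)).
have wt_x : wt x = wt_on S c.
  rewrite /wt_on (_ : [set t in S | _] = ord_rot k @: [set u | x 0 u != 0]).
    by rewrite card_imset //; exact: ord_rot_inj.
  apply/setP => t; rewrite inE /S; apply/andP/imsetP.
    case=> /imsetP [u vu ->] cu; exists u => //.
    by rewrite inE /x mxE mulf_neq0 //; rewrite inE in vu.
  case=> u; rewrite inE /x mxE mulf_eq0 negb_or => /andP [vu cu] ->.
  by split => //; apply: imset_f; rewrite inE.
rewrite -wt_x => wt_x_neq0; apply: (bch_bound (s := s) g_prim); last first.
  by apply: contraNneq wt_x_neq0 => ->; rewrite wt0.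
move=> j /gB Bj; have n_gt0 := prim_order_gt0 g_prim.
apply: (etrans _ (dual_rot_orth k n_gt0 An Bn v_dual c_AB Bj)).
by apply: eq_bigr => u _; rewrite mxE.
Qed.

Lemma dual_support_local_dist (A B : seq L) (g : L) s D (v : 'rV[L]_n) :
  n.-primitive_root g ->
  {in A, forall a, a ^+ n = 1} -> {in B, forall b, b ^+ n = 1} ->
  (forall j, (j < D)%N -> g ^+ (s + j) \in B) ->
  dual (cyc_code n A) v -> v != 0 ->
  forall i, exists S : {set 'I_n},
    [/\ i \in S, #|S| = wt v & local_dist (cyc_code n (setmul A B)) S D.+1].
Proof.
move=> g_prim An Bn gB v_dual /rV0Pn [t0 vt0] i.
exists (ord_rot (i + n - t0) @: [set u | v 0 u != 0]); split.
- apply/imsetP; exists t0; rewrite ?inE //; apply/val_inj => /=.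
  rewrite addnBA ?addKn ?modnDr ?modn_small //.
  by rewrite (leq_trans (ltnW (ltn_ord t0))) ?leq_addl.
- exact/card_imset/ord_rot_inj.
exact: rot_support_local_dist g_prim An Bn gB v_dual.
Qed.

End CyclicCodes.

Section SubfieldSubcodes.
Variables (K : finFieldType) (L : fieldExtType K).

Lemma cyc_code_subE n (Z : seq L) (c : 'rV[K]_n) :
  cyc_code_sub n Z c <-> cyc_code n Z (map_mx (in_alg L) c).
Proof. by rewrite /cyc_code_sub /cyc_code map_rVpoly. Qed.

Lemma wt_on_map_mx n (S : {set 'I_n}) (c : 'rV[K]_n) :
  wt_on S (map_mx (in_alg L) c) = wt_on S c.
Proof. by apply: eq_card => i; rewrite !inE mxE fmorph_eq0. Qed.

Lemma wt_map_mx n (c : 'rV[K]_n) : wt (map_mx (in_alg L) c) = wt c.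
Proof. by apply: eq_card => i; rewrite !inE mxE fmorph_eq0. Qed.

Lemma cyc_code_sub_cyclic n (Z : seq L) :
  {in Z, forall z, z ^+ n = 1} -> is_cyclic (cyc_code_sub n Z).
Proof.
move=> Zn c /cyc_code_subE /(cyc_code_cyclic Zn); rewrite cyc_code_subE.
by congr (cyc_code _ _ _); apply/rowP => i; rewrite !mxE.
Qed.

Lemma local_dist_cyc_code_sub n (Z : seq L) (S : {set 'I_n}) delta :
  local_dist (cyc_code n Z) S delta -> local_dist (cyc_code_sub n Z) S delta.
Proof. by move=> Z_local c /cyc_code_subE /Z_local; rewrite wt_on_map_mx. Qed.

Lemma pchar_nat_card : [pchar L].-nat #|K|.
Proof.
have [p p_prime pK] := finPcharP K.
by rewrite (card_pprimeChar pK) pnatX pnatE // (pchar_lalg L) pK.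
Qed.

Definition qfrob (x : L) : L := x ^+ #|K|.

Lemma qfrob_is_nmod_morphism : nmod_morphism qfrob.
Proof.
split; rewrite /qfrob; last by move=> x y; rewrite exprDn_pchar ?pchar_nat_card.
by rewrite expr0n eqn0Ngt (ltnW (finNzRing_gt1 K)).
Qed.

Lemma qfrob_is_monoid_morphism : monoid_morphism qfrob.
Proof. by split; rewrite /qfrob ?expr1n // => x y; rewrite exprMn. Qed.

HB.instance Definition _ := GRing.isNmodMorphism.Build L L qfrob
  qfrob_is_nmod_morphism.
HB.instance Definition _ := GRing.isMonoidMorphism.Build L L qfrob
  qfrob_is_monoid_morphism.

(* The Frobenius permutes the factors of gen_poly Z, so it fixes its
   coefficients, which therefore lie in K by Fermat's little theorem. *)
Lemma gen_poly_subfield (Z : seq L) : {in Z, forall z, z ^+ #|K| \in Z} ->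
  exists g : {poly K}, map_poly (in_alg L) g = gen_poly Z.
Proof.
move=> Zq; have uniq_qZ : uniq (map qfrob (undup Z)).
  by rewrite map_inj_uniq ?undup_uniq //; apply: fmorph_inj.
have qZ_sub : {subset map qfrob (undup Z) <= undup Z}.
  by move=> _ /mapP [z Zz ->]; rewrite mem_undup Zq // -mem_undup.
have [_ qZ_eq] := uniq_min_size uniq_qZ qZ_sub (eq_leq (esym (size_map _ _))).
have fix_gen : map_poly qfrob (gen_poly Z) = gen_poly Z.
  rewrite rmorph_prod (eq_bigr (fun z => 'X - (qfrob z)%:P)) => [|z _]; last first.
    by rewrite /= map_polyXsubC.
  rewrite -(big_map qfrob xpredT (fun w => 'X - w%:P)); apply: perm_big.
  exact: uniq_perm uniq_qZ (undup_uniq Z) qZ_eq.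
have /polyOver1P [g ->] : gen_poly Z \is a polyOver 1%VS.
  apply/polyOverP => i; rewrite (Fermat's_little_theorem 1%AS) dimv1 expn1.
  by rewrite -{2}fix_gen coef_map.
by exists g.
Qed.

Lemma has_dim_cyc_code_sub n (Z : seq L) : {in Z, forall z, z ^+ #|K| \in Z} ->
  (size (undup Z) <= n)%N -> has_dim (cyc_code_sub n Z) (n - size (undup Z)).
Proof.
move=> Zq size_Z; have [g g_gen] := gen_poly_subfield Zq.
have size_g : size g = (size (undup Z)).+1.
  by rewrite -(size_map_poly (in_alg L)) g_gen size_prod_XsubC.
have [|G [G_free CG]] := has_dim_dvdp (n := n) _ size_g size_Z.
  by rewrite -size_poly_eq0 size_g.
by exists G; split=> // c; rewrite -CG /cyc_code_sub -g_gen dvdp_map.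
Qed.

End SubfieldSubcodes.

Lemma exprz_mod (L : fieldType) (g : L) n k t (e : int) :
  g ^+ n = 1 -> g != 0 -> e = k%:Z - (t * n)%N%:Z -> g ^ e = g ^+ k.
Proof.
move=> gn g_neq0 ->; rewrite expfzDr // -exprnP -exprnN mulnC exprM gn.
by rewrite expr1n invr1 mulr1.
Qed.

Section ProductSetCode.
Variables (K : finFieldType) (L : fieldExtType K) (alpha : L).
Variables (n m b delta N M h : nat).
Hypotheses (n_def : n = (2 * N + 1)%N) (m_def : m = (2 * M)%N).
Hypotheses (delta_def : delta = (2 * h + 2)%N) (N_ge : (2 * h + M + 1 <= N)%N).
Hypotheses (M_gt0 : (0 < M)%N) (alpha_prim : n.-primitive_root alpha).
Hypothesis (b_coprime : coprime b n).

Local Notation g := (alpha ^+ b).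
Local Notation A := (setA alpha n m b).
Local Notation B := (setB alpha b delta).
Local Notation AB := (setmul A B).

Lemma n_gt0 : (0 < n)%N. Proof. by rewrite n_def addn1. Qed.

Lemma g_prim : n.-primitive_root g.
Proof. by rewrite prim_root_exp_coprime. Qed.

Lemma expr_g_mod s e : e = (s + n)%N -> g ^+ e = g ^+ s.
Proof. by move=> ->; rewrite exprD (prim_expr_order g_prim) mulr1. Qed.

Lemma expr_g_root1 s : (g ^+ s) ^+ n = 1.
Proof. by rewrite exprAC (prim_expr_order g_prim) expr1n. Qed.

Lemma mem_setA z : z \in A <->
  z = 1 \/ exists2 j, (1 <= j <= M)%N & z = g ^+ (N + j) \/ z = g ^+ (N + 1 - j).
Proof.
have alpha_neq0 : alpha != 0 by rewrite (prim_root_eq0 alpha_prim) -lt0n n_gt0.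
have half_j j : ((n + 2 * j - 1) %/ 2 = N + j)%N.
  rewrite n_def (_ : (2 * N + 1 + 2 * j - 1 = (N + j) * 2)%N) ?mulnK //; lia.
have pos_j j : alpha ^ (((n + 2 * j - 1) %/ 2 * b)%N) = g ^+ (N + j).
  by rewrite half_j -exprnP -exprM mulnC.
have neg_j j : (j <= N + 1)%N ->
    alpha ^ (- (((n + 2 * j - 1) %/ 2 * b)%N)%:Z) = g ^+ (N + 1 - j).
  move=> jN; rewrite half_j -exprM [(_ * b)%N]mulnC.
  apply: (exprz_mod (t := b) (prim_expr_order alpha_prim) alpha_neq0).
  have E : (b * (N + 1 - j) + b * (N + j) = b * n)%N.
    by rewrite -mulnDr n_def; congr (_ * _)%N; lia.
  by rewrite -E PoszD [(b * (N + j))%N]mulnC; lia.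
rewrite /setA mem_undup in_cons mem_cat (_ : m./2 = M); last first.
  by rewrite m_def mul2n doubleK.
split.
  case/orP => [/eqP ->|/orP [] /mapP [j]]; [by left | |];
    rewrite mem_iota => jM ->; right; exists j; try lia.
    by left; rewrite pos_j.
  by right; rewrite neg_j //; lia.
case=> [->|[j jM [->|->]]]; first by rewrite eqxx.
  apply/orP; right; apply/orP; left; apply/mapP; exists j; last by rewrite pos_j.
  by rewrite mem_iota; lia.
apply/orP; right; apply/orP; right; apply/mapP; exists j.
  by rewrite mem_iota; lia.
by rewrite neg_j //; lia.
Qed.

Lemma mem_setB z : z \in B <-> exists2 i, (i <= 2 * h)%N & z = g ^+ (i + n - h).
Proof.
have alpha_neq0 : alpha != 0 by rewrite (prim_root_eq0 alpha_prim) -lt0n n_gt0.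
have half_delta : ((delta - 2) %/ 2 = h)%N.
  by rewrite delta_def (_ : (2 * h + 2 - 2 = h * 2)%N) ?mulnK //; lia.
have exp_i i : alpha ^ ((i%:Z - h%:Z) * b%:Z) = g ^+ (i + n - h).
  rewrite -exprM.
  apply: (exprz_mod (t := b) (prim_expr_order alpha_prim) alpha_neq0).
  have E : (b * (i + n - h) = b * i + b * n - b * h)%N.
    by rewrite -mulnDr -mulnBr; congr (_ * _)%N; lia.
  have E2 : (b * h <= b * i + b * n)%N.
    by rewrite -mulnDr leq_mul2l; apply/orP; right; lia.
  by rewrite E -(subzn E2) PoszD !PoszM; ring.
rewrite /setB half_delta mem_undup; split.
  by case/mapP => i; rewrite mem_iota => ih ->; exists i; [lia | exact: exp_i].
by case=> i ih ->; apply/mapP; exists i; [rewrite mem_iota; lia | rewrite exp_i].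
Qed.

Definition AB_exps : seq nat :=
  iota 0 (h + 1) ++ iota (N + 1 - M - h) (2 * M + 2 * h) ++ iota (n - h) h.

Lemma mem_AB_exps s : s \in AB_exps =
  [|| (s <= h)%N, (N + 1 - M - h <= s <= N + M + h)%N | (n - h <= s < n)%N].
Proof. by rewrite !mem_cat !mem_iota; apply/idP/idP; lia. Qed.

Lemma mem_setAB z : z \in AB <-> exists2 s, s \in AB_exps & z = g ^+ s.
Proof.
rewrite /setmul mem_undup; split.
  case/allpairsP => [[x y] /= [/mem_setA x_A /mem_setB [i ih ->] ->]].
  case: x_A => [->|[j jM [->|->]]]; rewrite ?mul1r -?exprD.
  - have [hi | ih'] := leqP h i.
      by exists (i - h)%N; [rewrite mem_AB_exps; lia | apply: expr_g_mod; lia].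
    by exists (i + n - h)%N => //; rewrite mem_AB_exps; lia.
  - exists (N + j + i - h)%N; first by rewrite mem_AB_exps; lia.
    by apply: expr_g_mod; lia.
  - exists (N + 1 - j + i - h)%N; first by rewrite mem_AB_exps; lia.
    by apply: expr_g_mod; lia.
case=> s; rewrite mem_AB_exps => s_exps ->; apply/allpairsP.
have [s_le | s_gt] := leqP s h.
  exists (1, g ^+ (s + h + n - h)); split => /=; first by apply/mem_setA; left.
    by apply/mem_setB; exists (s + h)%N => //; lia.
  by rewrite mul1r; apply/esym/expr_g_mod; lia.
have [s_ge | s_lt] := leqP (n - h) s.
  exists (1, g ^+ (s + h - n + n - h)); split => /=; first by apply/mem_setA; left.
    by apply/mem_setB; exists (s + h - n)%N => //; lia.
  by rewrite mul1r; congr (_ ^+ _); lia.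
have [s_ge' | s_lt'] := leqP (N + 1 - h) s.
  have [sN | sN] := leqP (s - N) h.
    exists (g ^+ (N + 1), g ^+ (s + h - N - 1 + n - h)); split => /=.
    - by apply/mem_setA; right; exists 1%N; [lia | left].
    - by apply/mem_setB; exists (s + h - N - 1)%N => //; lia.
    by rewrite -exprD; apply/esym/expr_g_mod; lia.
  exists (g ^+ (N + (s - N - h)), g ^+ (2 * h + n - h)); split => /=.
  - by apply/mem_setA; right; exists (s - N - h)%N; [lia | left].
  - by apply/mem_setB; exists (2 * h)%N.
  by rewrite -exprD; apply/esym/expr_g_mod; lia.
exists (g ^+ (N + 1 - (N + 1 - h - s)), g ^+ (0 + n - h)); split => /=.
- by apply/mem_setA; right; exists (N + 1 - h - s)%N; [lia | right].
- by apply/mem_setB; exists 0%N => //; lia.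
by rewrite -exprD; apply/esym/expr_g_mod; lia.
Qed.

Lemma setA_root1 : {in A, forall z, z ^+ n = 1}.
Proof.
by move=> z /mem_setA [->|[j _ [->|->]]]; rewrite ?expr1n ?expr_g_root1.
Qed.

Lemma setB_root1 : {in B, forall z, z ^+ n = 1}.
Proof. by move=> z /mem_setB [i _ ->]; apply: expr_g_root1. Qed.

Lemma setAB_root1 : {in AB, forall z, z ^+ n = 1}.
Proof. by move=> z /mem_setAB [s _ ->]; apply: expr_g_root1. Qed.

Lemma size_setAB : size (undup AB) = (m + 2 * delta - 3)%N.
Proof.
have exps_uniq : uniq AB_exps.
  rewrite !cat_uniq !iota_uniq /= !andbT; apply/andP; split.
    by apply/hasPn => x; rewrite mem_cat !mem_iota => x_in /=; lia.
  by apply/hasPn => x; rewrite !mem_iota => x_in /=; lia.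
have exps_lt s : s \in AB_exps -> (s < n)%N by rewrite mem_AB_exps; lia.
have AB_perm : perm_eq (undup AB) [seq g ^+ s | s <- AB_exps].
  apply: uniq_perm; rewrite ?undup_uniq //.
    rewrite map_inj_in_uniq // => s t /exps_lt s_lt /exps_lt t_lt /eqP.
    by rewrite (eq_prim_root_expr g_prim) !modn_small // => /eqP.
  move=> z; rewrite mem_undup; apply/idP/mapP => [/mem_setAB [s] | [s s_exps ->]].
    by exists s.
  by apply/mem_setAB; exists s.
by rewrite (perm_size AB_perm) size_map !size_cat !size_iota; lia.
Qed.

Lemma setAB_inv z : z \in AB -> z^-1 \in AB.
Proof.
case/mem_setAB => s; rewrite mem_AB_exps => s_exps ->; apply/mem_setAB.
have [-> | s_gt0] := posnP s.
  by exists 0%N; rewrite ?expr0 ?invr1 // mem_AB_exps.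
exists (n - s)%N; first by rewrite mem_AB_exps; lia.
have g_neq0 : g != 0 by rewrite (prim_root_eq0 g_prim) -lt0n n_gt0.
apply: (mulfI (expf_neq0 s g_neq0)); rewrite -exprD subnKC; last by lia.
by rewrite (prim_expr_order g_prim) divff // expf_neq0.
Qed.

Lemma setAB_consecutive j :
  (j < 2 * M + 2 * h)%N -> g ^+ (N + 1 - M - h + j) \in AB.
Proof.
move=> j_lt; apply/mem_setAB; exists (N + 1 - M - h + j)%N => //.
by rewrite mem_AB_exps; lia.
Qed.

Lemma setB_consecutive j : (j < delta - 1)%N -> g ^+ (n - h + j) \in B.
Proof. by move=> j_lt; apply/mem_setB; exists j; [lia | congr (_ ^+ _); lia]. Qed.

Lemma setA_shift_neq1 a s : a \in A -> (1 <= s <= N - M)%N -> g ^+ s * a != 1.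
Proof.
move=> a_A s_range; have g_neq1 e : (0 < e < n)%N -> g ^+ e != 1.
  move=> e_range; rewrite -(expr0 g) (eq_prim_root_expr g_prim).
  by rewrite !modn_small; lia.
case/mem_setA: a_A => [->|[j jM [->|->]]];
  by rewrite ?mulr1 -?exprD g_neq1 //; lia.
Qed.

Lemma dual_setA_wt (v : 'rV[L]_n) :
  dual (cyc_code n A) v -> v != 0 -> (N - M < wt v)%N.
Proof.
apply: (dual_cyc_code_wt (s := 1%N) g_prim) => j j_lt a a_A.
split; first by rewrite exprMn expr_g_root1 setA_root1 // mulr1.
by apply: setA_shift_neq1 => //; lia.
Qed.

Hypothesis n_dvd : (n %| #|K| + 1)%N.

Lemma setAB_qfrob_closed : {in AB, forall z, z ^+ #|K| \in AB}.
Proof.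
move=> z z_AB; suff -> : z ^+ #|K| = z^-1 by apply: setAB_inv.
have z_neq0 := root1_neq0 n_gt0 (setAB_root1 z_AB).
apply: (mulIf z_neq0); rewrite mulVf // -exprSr -addn1 -(divnK n_dvd) mulnC.
by rewrite exprM setAB_root1 // expr1n.
Qed.

Lemma CAB_dim : has_dim (cyc_code_sub n AB) (n + 3 - m - 2 * delta).
Proof.
have -> : (n + 3 - m - 2 * delta = n - size (undup AB))%N.
  by rewrite size_setAB; lia.
by apply: has_dim_cyc_code_sub setAB_qfrob_closed _; rewrite size_setAB; lia.
Qed.

Lemma CAB_wt (c : 'rV[K]_n) :
  cyc_code_sub n AB c -> c != 0 -> (m + delta - 1 <= wt c)%N.
Proof.
move=> /cyc_code_subE /cyc_codeP c_AB c_neq0; rewrite -(wt_map_mx L).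
suff : (2 * M + 2 * h < wt (map_mx (in_alg L) c))%N by lia.
apply: (bch_bound (s := (N + 1 - M - h)%N) g_prim); last by rewrite map_mx_eq0.
by move=> j /setAB_consecutive /c_AB.
Qed.

Lemma CAB_local_dist (v : 'rV[L]_n) : dual (cyc_code n A) v -> v != 0 ->
  forall i, exists S : {set 'I_n},
    [/\ i \in S, #|S| = wt v & local_dist (cyc_code_sub n AB) S delta].
Proof.
move=> v_dual v_neq0 i.
have [|S [iS card_S S_local]] := dual_support_local_dist (s := (n - h)%N)
  (D := (delta - 1)%N) g_prim setA_root1 setB_root1 _ v_dual v_neq0 i.
  exact: setB_consecutive.
exists S; split => //; move: (local_dist_cyc_code_sub S_local).
by rewrite (_ : (delta - 1).+1 = delta) //; lia.
Qed.

Lemma CAB_optimal_LRC dA : is_min_dist (dual (cyc_code n A)) dA ->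
  let C := cyc_code_sub n AB in
  [/\ is_cyclic C, is_LRC C (dA + 1 - delta) delta
    & has_dim C (n + 3 - m - 2 * delta)] /\
  ((delta%:Z - 2 < n%:Z - m%:Z - dA%:Z) ->
     is_min_dist C (m + delta - 1) /\
     optimal_LRC_params n (n + 3 - m - 2 * delta) (m + delta - 1)
                        (dA + 1 - delta) delta).
Proof.
move=> [[v v_dual [v_neq0 wt_v]] _] C.
have dA_gt : (N - M < dA)%N by rewrite -wt_v dual_setA_wt.
have local := CAB_local_dist v_dual v_neq0; rewrite wt_v in local.
split.
  split; [exact: cyc_code_sub_cyclic setAB_root1 | | exact: CAB_dim].
  move=> i; have [S [iS card_S S_local]] := local i.
  by exists S; split => //; lia.
move=> dA_lt; have r_lt_k : (dA + 1 - delta < n + 3 - m - 2 * delta)%N.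
  by move: dA_lt; lia.
have [S [_ card_S S_local]] := local (Ordinal n_gt0).
have [||||c Cc [c_neq0 wt_c]] :=
  local_dist_wt_ub (r := dA + 1 - delta) CAB_dim S_local; try lia.
split; last by apply: optimal_LRC_params_ceil2; lia.
apply: is_min_distP; last exact: CAB_wt.
by exists c => //; split => //; lia.
Qed.

End ProductSetCode.

Theorem corollary5p3 (K : finFieldType) (L : fieldExtType K)
  (n m b delta dA : nat) (alpha : L) :
  \dim {:L} = 2%N ->
  odd n -> (n %| #|K| + 1)%N ->
  n.-primitive_root alpha ->
  (0 < m)%N -> ~~ odd m ->
  (0 < b)%N -> coprime b n ->
  ~~ odd delta -> (2 <= delta)%N -> (2 * delta + m <= n + 1)%N ->
  is_min_dist (dual (cyc_code n (setA alpha n m b))) dA ->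
  let C := cyc_code_sub n (setmul (setA alpha n m b) (setB alpha b delta)) in
  [/\ is_cyclic C, is_LRC C (dA + 1 - delta) delta
    & has_dim C (n + 3 - m - 2 * delta)] /\
  ((delta%:Z - 2 < n%:Z - m%:Z - dA%:Z) ->
     is_min_dist C (m + delta - 1) /\
     optimal_LRC_params n (n + 3 - m - 2 * delta) (m + delta - 1)
                        (dA + 1 - delta) delta).
Proof.
move=> _ n_odd n_dvd alpha_prim m_gt0 m_even _ b_coprime.
move=> delta_even delta_ge2 delta_le.
have [N n_def] : exists N, n = (2 * N + 1)%N.
  by exists n./2; have := odd_double_half n; rewrite n_odd -mul2n; lia.
have [M m_def] : exists M, m = (2 * M)%N.
  by exists m./2; have := odd_double_half m; rewrite (negbTE m_even) -mul2n; lia.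
have [h delta_def] : exists h, delta = (2 * h + 2)%N.
  exists (delta./2 - 1)%N; have := odd_double_half delta.
  by rewrite (negbTE delta_even) -mul2n; lia.
by apply: (CAB_optimal_LRC (N := N) (M := M) (h := h)) => //; lia.
Qed.
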